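(* Let $M$ be a model with borders and let $f:M^s\to U(n)$ be the unique p-morphism (with image $M_{\wedge,\to}$). For any $w\in M^s$ and any $(\wedge,\to)$-formula $\varphi$, \[ M,w\models\varphi \iff M_{\wedge,\to},f(w)\models\varphi. \]
   Context: Fix $n\ge1$ and variables $p_1,\dots,p_n$; $2^n=\{0,1\}^n$ with componentwise order. A model is $(M,\le,c)$, $(M,\le)$ a poset, $c:M\to 2^n$ order-preserving, with intuitionistic Kripke semantics. A p-morphism of models is an order- and colour-preserving map $f$ such that $f(x)\le y$ implies $f(x')=y$ for some $x'\ge x$. A $(\wedge,\to)$-formula uses only $\wedge$ and $\to$. A point $x$ is a $q$-border point if $x\not\models q$ and all $y>x$ satisfy $q$; $x$ is separated if it is a $q$-border point for some variable $q$. $M^s$: separated points with restricted order and colouring (a model in its own right; all its chains have at most $n$ elements). $M$ has borders if for every variable $p$ and every $x$ with $x\not\models p$ there is a $p$-border point $y\ge x$. $U(n)$ is the $n$-universal model: the generated submodel of the canonical model of IPC on $p_1,\dots,p_n$ (prime filters of the free Heyting algebra ordered by inclusion, $c(x)_i=1$ iff $p_i\in x$) consisting of points with finite up-set. For every model of finite depth there is a unique p-morphism into $U(n)$. $M_{\wedge,\to}$ is the image of the unique p-morphism $M^s\to U(n)$, a generated submodel of $U(n)$. *)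

From Stdlib Require Import ProofIrrelevance.
From mathcomp Require Import all_boot.

(* A model on the variables p_0..p_{n-1} (indexed by 'I_n):
   a poset (carrier, le) with an order-preserving colouring c : M -> 2^n,
   represented as col x i = i-th bit of c(x). *)
Record model (n : nat) := Model {
  carrier :> Type;
  le : carrier -> carrier -> Prop;
  col : carrier -> 'I_n -> bool;
  le_refl : forall x, le x x;
  le_trans : forall x y z, le x y -> le y z -> le x z;
  le_antisym : forall x y, le x y -> le y x -> x = y;
  col_mono : forall x y i, le x y -> col x i -> col y i
}.
Arguments le {n} m _ _.
Arguments col {n} m _ _.

Definition lt {n} (M : model n) (x y : M) : Prop := le M x y /\ x <> y.

Inductive form (n : nat) : Type :=
| Var : 'I_n -> form n
| Bot : form n
| And : form n -> form n -> form n
| Or  : form n -> form n -> form n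
| Imp : form n -> form n -> form n.
Arguments Bot {n}.

Fixpoint and_imp_form {n} (phi : form n) : Prop :=
  match phi with
  | Var _ => True
  | Bot => False
  | And a b => and_imp_form a /\ and_imp_form b
  | Or _ _ => False
  | Imp a b => and_imp_form a /\ and_imp_form b
  end.

Fixpoint forces {n} (M : model n) (x : M) (phi : form n) : Prop :=
  match phi with
  | Var i => col M x i = true
  | Bot => False
  | And a b => forces M x a /\ forces M x b
  | Or a b => forces M x a \/ forces M x b
  | Imp a b => forall y, le M x y -> forces M y a -> forces M y b
  end.

Definition border {n} (M : model n) (q : 'I_n) (x : M) : Prop :=
  col M x q = false /\ forall y, lt M x y -> col M y q = true.

Definition separated {n} (M : model n) (x : M) : Prop :=
  exists q, border M q x.

Definition has_borders {n} (M : model n) : Prop :=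
  forall (p : 'I_n) (x : M), col M x p = false ->
    exists y, le M x y /\ border M p y.

Section Restrict.
Variables (n : nat) (M : model n) (P : M -> Prop).
Definition rcar := {x : M | P x}.
Definition rle (x y : rcar) : Prop := le M (proj1_sig x) (proj1_sig y).
Definition rcol (x : rcar) (i : 'I_n) : bool := col M (proj1_sig x) i.
Lemma rle_refl x : rle x x. Proof. exact: le_refl. Qed.
Lemma rle_trans x y z : rle x y -> rle y z -> rle x z.
Proof. exact: le_trans. Qed.
Lemma rle_antisym x y : rle x y -> rle y x -> x = y.
Proof.
case: x => x px; case: y => y py; rewrite /rle /= => h1 h2.
move: (@le_antisym _ M _ _ h1 h2) => e; subst y.
by rewrite (proof_irrelevance _ px py).
Qed.
Lemma rcol_mono x y i : rle x y -> rcol x i -> rcol y i.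
Proof. exact: col_mono. Qed.
Definition restrict : model n :=
  @Model n rcar rle rcol rle_refl rle_trans rle_antisym rcol_mono.
End Restrict.
Arguments restrict {n} M P.

Definition sep_model {n} (M : model n) : model n := restrict M (separated M).

Definition pmorphism {n} (M N : model n) (f : M -> N) : Prop :=
  (forall x y, le M x y -> le N (f x) (f y)) /\
  (forall x, col N (f x) = col M x) /\
  (forall x y, le N (f x) y -> exists x', le M x x' /\ f x' = y).

Definition image_model {n} (M N : model n) (f : M -> N) : model n :=
  restrict N (fun y => exists x, f x = y).

Definition image_point {n} (M N : model n) (f : M -> N) (x : M)
  : image_model M N f :=
  exist (fun y => exists x, f x = y) (f x) (ex_intro _ x erefl).

From Stdlib Require Import Classical ProofIrrelevance.
From mathcomp Require Import all_boot.

(* A (/\,->)-formula refuted at a point of a model with borders is already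
   refuted at a separated point above it: for a variable p take a p-border
   point, and for an implication a -> b go to a point forcing a but not b and
   refute b there.  Hence forcing at separated points is the same in M and in
   M^s, where every witness of a refuted implication can be taken separated.
   Finally p-morphisms preserve forcing of all formulas, and the corestriction
   of f to its image is again a p-morphism. *)

Lemma forces_mono {n} {M : model n} {phi : form n} {x y : M} :
  le M x y -> forces M x phi -> forces M y phi.
Proof.
elim: phi x y => [i||a IHa b IHb|a IHa b IHb|a IHa b IHb] x y hxy /=.
- exact: col_mono hxy.
- by [].
- by case=> ha hb; split; [apply: IHa hxy ha | apply: IHb hxy hb].
- by case=> h; [left; apply: IHa hxy h | right; apply: IHb hxy h].
- by move=> h z hyz; apply: h; apply: le_trans hxy hyz.
Qed.

Lemma pmorphism_forces {n} {A B : model n} {g : A -> B} {phi : form n} {x : A} :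
  pmorphism A B g -> forces A x phi <-> forces B (g x) phi.
Proof.
case=> g_le [g_col g_back].
elim: phi x => [i||a IHa b IHb|a IHa b IHb|a IHa b IHb] x /=.
- by rewrite g_col.
- by [].
- by rewrite IHa IHb.
- by rewrite IHa IHb.
- split=> h y hxy.
  + case: (g_back _ _ hxy) => x' [hxx' <-].
    by rewrite -IHa -IHb; apply: h.
  + by rewrite IHa IHb; apply: h; apply: g_le.
Qed.

Lemma image_point_pmorphism {n} {A N : model n} {f : A -> N} :
  pmorphism A N f -> pmorphism A (image_model A N f) (image_point A N f).
Proof.
case=> f_le [f_col f_back]; split; [by [] | split; first by []].
move=> x [y y_im] /f_back [x' [hxx' fx'_eq]].
exists x'; split=> //.
move: y_im fx'_eq => /= y_im fx'_eq; subst y.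
by congr exist; apply: proof_irrelevance.
Qed.

Lemma not_forces_imp {n} {M : model n} {x : M} {a b : form n} :
  ~ forces M x (Imp _ a b) ->
  exists2 y, le M x y & forces M y a /\ ~ forces M y b.
Proof.
move=> hx; apply: NNPP => no_witness; apply: hx => y hxy hya.
by apply: NNPP => hyb; apply: no_witness; exists y.
Qed.

Lemma refuted_at_separated {n} {M : model n} {phi : form n} {x : M} :
  has_borders M -> and_imp_form phi -> ~ forces M x phi ->
  exists2 z, le M x z & separated M z /\ ~ forces M z phi.
Proof.
move=> hM; elim: phi x => [i||a IHa b IHb|a IHa b IHb|a IHa b IHb] //= x.
- move=> _ hx; have /hM [z [hxz z_border]] : col M x i = false.
    by apply/negbTE/negP.
  exists z => //; split; first by exists i.
  by case: z_border => ->.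
- case=> ha hb hx; case: (classic (forces M x a)) => [hxa | hxa].
  + have [|z hxz [z_sep hzb]] := IHb x hb; first by move=> hxb; apply: hx.
    by exists z => //; split=> // [[]].
  + have [z hxz [z_sep hza]] := IHa x ha hxa.
    by exists z => //; split=> // [[]].
- case=> _ hb /not_forces_imp [y hxy [hya hyb]].
  have [z hyz [z_sep hzb]] := IHb y hb hyb.
  exists z; first exact: le_trans hxy hyz.
  split=> // hz; apply/hzb/hz; first exact: le_refl.
  exact: forces_mono hyz hya.
Qed.

Lemma sep_model_forces {n} {M : model n} {phi : form n} {w : sep_model M} :
  has_borders M -> and_imp_form phi ->
  forces M (proj1_sig w) phi <-> forces (sep_model M) w phi.
Proof.
move=> hM; elim: phi w => [i||a IHa b IHb|a IHa b IHb|a IHa b IHb] //= w.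
- by case=> ha hb; rewrite IHa // IHb.
- case=> ha hb; split=> h y hwy.
  + by rewrite -IHa // -IHb //; apply: h.
  + move=> hya; apply: NNPP => hyb.
    have [z hyz [z_sep hzb]] := refuted_at_separated hM hb hyb.
    apply: hzb; rewrite (IHb (exist _ z z_sep)) //.
    apply: h; first exact: le_trans hwy hyz.
    by rewrite -IHa //; apply: forces_mono hyz hya.
Qed.

Theorem proposition3p12 (n : nat) (hn : 1 <= n) (M : model n)
  (hM : has_borders M) (N : model n) (f : sep_model M -> N)
  (hf : pmorphism (sep_model M) N f)
  (w : sep_model M) (phi : form n) (hphi : and_imp_form phi) :
  forces M (proj1_sig w) phi <->
  forces (image_model (sep_model M) N f) (image_point (sep_model M) N f w) phi.
Proof.
rewrite sep_model_forces //.
exact: pmorphism_forces (image_point_pmorphism hf).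
Qed.
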